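(* Let $(\mathfrak{g},[\cdot,\cdot],\langle\cdot,\cdot\rangle)$ be a nilpotent quadratic Lie algebra of dimension $n$. If $\mathfrak{g}$ admits an $(n-1)$-symplectic structure, then $\mathfrak{g}$ is abelian.
   Context: A quadratic Lie algebra is a finite-dimensional real Lie algebra $\mathfrak{g}$ endowed with a nondegenerate symmetric bilinear form $\langle\cdot,\cdot\rangle$ which is invariant: $\langle [u,v],w\rangle+\langle [u,w],v\rangle=0$ for all $u,v,w\in\mathfrak{g}$. A $k$-symplectic structure on a real Lie algebra $\mathfrak{g}$ of dimension $m(k+1)$ ($m,k\ge1$) is a pair consisting of a Lie subalgebra $\mathfrak{h}\subset\mathfrak{g}$ of dimension $mk$ and a family $(\theta_1,\dots,\theta_k)$ of skew-symmetric bilinear forms on $\mathfrak{g}$ such that: (i) $\bigcap_{i=1}^k\ker\theta_i=\{0\}$, where $\ker\theta_i=\{u\in\mathfrak{g}:\theta_i(u,v)=0\ \forall v\in\mathfrak{g}\}$; (ii) each $\theta_i$ is a 2-cocycle: $\theta_i([u,v],w)+\theta_i([v,w],u)+\theta_i([w,u],v)=0$ for all $u,v,w$; (iii) $\theta_i(u,v)=0$ for all $u,v\in\mathfrak{h}$ and all $i$. (Thus an $(n-1)$-symplectic structure on an $n$-dimensional Lie algebra has $\dim\mathfrak{h}=n-1$.) *)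

From HB Require Import structures.
From mathcomp Require Import all_boot all_order all_algebra.
From mathcomp Require Import reals.
Set Implicit Arguments. Unset Strict Implicit. Unset Printing Implicit Defensive.
Import Order.TTheory GRing.Theory Num.Theory.
Local Open Scope ring_scope.

Section Lie.
Variables (R : realType) (V : vectType R).

Definition lie_bracket (br : V -> V -> V) : Prop :=
  [/\ (forall (a : R) u v w, br (a *: u + v) w = a *: br u w + br v w),
      (forall (a : R) u v w, br u (a *: v + w) = a *: br u v + br u w),
      (forall u, br u u = 0) &
      (forall u v w, br u (br v w) + br v (br w u) + br w (br u v) = 0)].

Definition bilinear_form (B : V -> V -> R) : Prop :=
  (forall (a : R) u v w, B (a *: u + v) w = a * B u w + B v w) /\
  (forall (a : R) u v w, B u (a *: v + w) = a * B u v + B u w).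

Definition quadratic (br : V -> V -> V) (B : V -> V -> R) : Prop :=
  [/\ bilinear_form B,
      (forall u v, B u v = B v u),
      (forall u, (forall v, B u v = 0) -> u = 0) &
      (forall u v w, B (br u v) w + B (br u w) v = 0)].

Definition bracket_space (br : V -> V -> V) (U W : {vspace V}) : {vspace V} :=
  <<[seq br u w | u <- vbasis U, w <- vbasis W]>>%VS.

Definition lower_central (br : V -> V -> V) (k : nat) : {vspace V} :=
  iter k (bracket_space br fullv) fullv.

Definition nilpotent (br : V -> V -> V) : Prop :=
  exists N, lower_central br N = 0%VS.

Definition abelian (br : V -> V -> V) : Prop := forall u v, br u v = 0.

Definition subalgebra (br : V -> V -> V) (h : {vspace V}) : Prop :=
  forall u v, u \in h -> v \in h -> br u v \in h.

Definition k_symplectic_structure (br : V -> V -> V) (m k : nat)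
    (h : {vspace V}) (theta : 'I_k -> V -> V -> R) : Prop :=
  [/\ [/\ (1 <= m)%N, (1 <= k)%N & \dim (fullv : {vspace V}) = (m * k.+1)%N],
      subalgebra br h /\ \dim h = (m * k)%N,
      (forall i, bilinear_form (theta i) /\ forall u v, theta i u v = - theta i v u),
      (forall u, (forall i v, theta i u v = 0) -> u = 0) /\
      (forall i u v w,
          theta i (br u v) w + theta i (br v w) u + theta i (br w u) v = 0) &
      (forall i u v, u \in h -> v \in h -> theta i u v = 0)].

Definition admits_k_symplectic (br : V -> V -> V) (k : nat) : Prop :=
  exists m h theta, @k_symplectic_structure br m k h theta.

End Lie.

(* Since dim g = m n and dim h = m (n-1), we get m = 1: h is a hyperplane,
   so g = h + R e for a single vector e.  For y, z in h write
   [e, y] = c e mod h and [e, z] = d e mod h.  The cocycle identity for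
   theta_i on (e, y, z), together with theta_i = 0 on h x h, shows that
   theta_i ([y, z] - (c z - d y), e) = 0 for all i; as theta_i vanishes on
   h x h this element of h lies in the common kernel, hence
   [y, z] = c z - d y.  Nilpotency forbids eigenvectors of ad y with a
   nonzero eigenvalue, which forces [y, z] = 0: h is an abelian subalgebra.
   Finally invariance of the quadratic form gives <[x, e], v> = 0 for x in h
   and all v, so [x, e] = 0 by nondegeneracy and g is abelian. *)
From HB Require Import structures.
From mathcomp Require Import all_boot all_order all_algebra.
From mathcomp Require Import reals.
From mathcomp Require Import lra zify.
Set Implicit Arguments. Unset Strict Implicit. Unset Printing Implicit Defensive.
Local Open Scope ring_scope.
Import GRing.Theory Num.Theory.

Section AffineLinear.
Variables (K : pzRingType) (U W : lmodType K) (f : U -> W).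
Hypothesis f_lin : forall a u v, f (a *: u + v) = a *: f u + f v.

Lemma lin0 : f 0 = 0.
Proof.
have := f_lin 1 0 0; rewrite !scale1r addr0 => /(congr1 (fun x => x - f 0)).
by rewrite subrr addrK.
Qed.

Lemma linD u v : f (u + v) = f u + f v.
Proof. by rewrite -[u]scale1r f_lin !scale1r. Qed.

Lemma linZ a u : f (a *: u) = a *: f u.
Proof. by rewrite -[a *: u]addr0 f_lin lin0 addr0. Qed.

Lemma linN u : f (- u) = - f u.
Proof. by rewrite -scaleN1r linZ scaleN1r. Qed.

End AffineLinear.

Lemma codim1_complement (K : fieldType) (vT : vectType K) (U : {vspace vT}) :
  (\dim {:vT} <= (\dim U).+1)%N ->
  exists e : vT, forall v, exists t : K, v - t *: e \in U.
Proof.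
move=> dimU; set e := vpick U^C%VS; exists e => v.
have complE : (U^C = <[e]>)%VS.
  apply/eqP; rewrite eq_sym eqEdim -memvE memv_pick dim_vline vpick0 /=.
  have : (\dim U^C%VS <= 1)%N by rewrite dimv_compl; lia.
  by case: (eqVneq U^C%VS 0%VS) => [-> | _]; rewrite ?dimv0.
have : v \in (U + U^C)%VS by rewrite addv_complf memvf.
case/memv_addP => p hp [q]; rewrite complE => /vlineP [t ->] ->.
by exists t; rewrite addrK.
Qed.

Lemma complement_decomp (K : fieldType) (vT : vectType K) (U : {vspace vT}) e :
  (forall v, exists t : K, v - t *: e \in U) ->
  forall v, exists t : K, exists2 p, p \in U & v = t *: e + p.
Proof.
move=> e_compl v; have [t ht] := e_compl v.
by exists t, (v - t *: e); rewrite // addrC subrK.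
Qed.

Section LieAlgebra.
Variables (R : realType) (V : vectType R) (br : V -> V -> V).
Hypothesis br_lie : lie_bracket br.

Let brL w : forall a u v, br (a *: u + v) w = a *: br u w + br v w.
Proof. by case: br_lie => L _ _ _ a u v; apply: L. Qed.
Let brR u : forall a v w, br u (a *: v + w) = a *: br u v + br u w.
Proof. by case: br_lie => _ Rr _ _ a v w; apply: Rr. Qed.

Lemma br0l w : br 0 w = 0. Proof. exact: (lin0 (brL w)). Qed.
Lemma br0r u : br u 0 = 0. Proof. exact: (lin0 (brR u)). Qed.
Lemma brDl u v w : br (u + v) w = br u w + br v w. Proof. exact: (linD (brL w)). Qed.
Lemma brDr u v w : br u (v + w) = br u v + br u w. Proof. exact: (linD (brR u)). Qed.
Lemma brZl a u w : br (a *: u) w = a *: br u w. Proof. exact: (linZ (brL w)). Qed.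
Lemma brZr a u v : br u (a *: v) = a *: br u v. Proof. exact: (linZ (brR u)). Qed.
Lemma brNr u v : br u (- v) = - br u v. Proof. exact: (linN (brR u)). Qed.

Lemma br_alt u : br u u = 0. Proof. by case: br_lie. Qed.

Lemma br_anticomm u v : br u v = - br v u.
Proof.
apply/eqP; rewrite -addr_eq0; apply/eqP.
by have := br_alt (u + v); rewrite brDl !brDr !br_alt add0r addr0.
Qed.

Lemma mem_bracket_space (W : {vspace V}) u w :
  w \in W -> br u w \in bracket_space br fullv W.
Proof.
move=> wW; rewrite (coord_vbasis (memvf u)).
rewrite (big_morph (br^~ w) (fun x y => brDl x y w) (br0l w)).
apply: memv_suml => i _; rewrite brZl (coord_vbasis wW); apply: memvZ.
rewrite (big_morph (br _) (brDr _) (br0r _)).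
apply: memv_suml => j _; rewrite brZr; apply: memvZ.
by apply/memv_span/allpairs_f; apply: mem_nth; rewrite size_tuple.
Qed.

(* In a nilpotent Lie algebra, ad y has no eigenvector with a nonzero
   eigenvalue: such a w would lie in every term of the lower central series. *)
Lemma nilpotent_ad_eigen y w c :
  nilpotent br -> c != 0 -> br y w = c *: w -> w = 0.
Proof.
move=> [N lcsN] c0 yw.
have w_lcs k : w \in lower_central br k.
  elim: k => [|k IH]; first exact: memvf.
  have -> : w = br y (c^-1 *: w) by rewrite brZr yw scalerA mulVf // scale1r.
  exact/mem_bracket_space/memvZ.
by apply/eqP; rewrite -memv0 -lcsN.
Qed.

Lemma symplectic_hyperplane m k (h : {vspace V}) (theta : 'I_k -> V -> V -> R) :
  k_symplectic_structure br m h theta -> k = (\dim (fullv : {vspace V})).-1 ->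
  \dim (fullv : {vspace V}) = (\dim h).+1.
Proof.
move=> [[m1 k1 dimV] [_ dimh] _ _ _] kE; rewrite dimh dimV.
have m_eq1 : m = 1%N by rewrite dimV in kE; nia.
by rewrite m_eq1 !mul1n.
Qed.

Section SymplecticHyperplane.
Variables (m k : nat) (h : {vspace V}) (theta : 'I_k -> V -> V -> R) (e : V).
Hypothesis symp : k_symplectic_structure br m h theta.
Hypothesis e_compl : forall v, exists t, v - t *: e \in h.

Let thL i w : forall a u v,
  (theta i (a *: u + v) w : R^o) = a *: (theta i u w : R^o) + theta i v w.
Proof. by case: symp => _ _ lin _ _ a u v; case: (lin i) => -[L _] _; apply: L. Qed.
Let thR i u : forall a v w,
  (theta i u (a *: v + w) : R^o) = a *: (theta i u v : R^o) + theta i u w.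
Proof. by case: symp => _ _ lin _ _ a v w; case: (lin i) => -[_ Rr] _; apply: Rr. Qed.

Let th_skew i u v : theta i u v = - theta i v u.
Proof. by case: symp => _ _ lin _ _; case: (lin i). Qed.
Let th_h i u v : u \in h -> v \in h -> theta i u v = 0.
Proof. by case: symp => _ _ _ _; apply. Qed.
Let th_cocycle i u v w :
  theta i (br u v) w + theta i (br v w) u + theta i (br w u) v = 0.
Proof. by case: symp => _ _ _ [_ cocycle] _; apply: cocycle. Qed.

Let decomp v : exists t, exists2 p, p \in h & v = t *: e + p :=
  complement_decomp e_compl v.

(* An element of h is determined to be zero by its pairings with e:
   theta_i (w, .) already vanishes on h. *)
Lemma theta_radical w : w \in h -> (forall i, theta i w e = 0) -> w = 0.
Proof.
move=> wh we; case: symp => _ _ _ [nondeg _] _; apply: nondeg => i v.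
have [t [p ph ->]] := decomp v.
by rewrite thR we (th_h i wh ph) [_ *: _]mulr0 addr0.
Qed.

Lemma bracket_hyperplane y z c d :
  y \in h -> z \in h -> br e y - c *: e \in h -> br e z - d *: e \in h ->
  br y z = c *: z - d *: y.
Proof.
move=> yh zh ey ez; apply/eqP; rewrite -subr_eq0; apply/eqP.
have hsub : subalgebra br h by case: symp => _ [].
apply: theta_radical => [|i]; first by rewrite !memvB ?hsub ?memvZ.
have eyE : br e y = c *: e + (br e y - c *: e) by rewrite addrC subrK.
have ezE : br e z = d *: e + (br e z - d *: e) by rewrite addrC subrK.
have E1 : theta i (br e y) z = c * theta i e z.
  by rewrite eyE thL (th_h i ey zh) addr0.
have E2 : theta i (br z e) y = - (d * theta i e y).
  by rewrite br_anticomm (linN (thL i y)) ezE thL (th_h i ez yh) addr0.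
have := th_cocycle i e y z.
rewrite E1 E2 (th_skew i e z) (th_skew i e y) => cocycle.
(* expand theta_i (. , e) linearly; scaling on R^o is multiplication *)
rewrite !(linD (thL i e), linN (thL i e), linZ (thL i e)) /GRing.scale /=.
lra.
Qed.

Lemma hyperplane_abelian y z :
  nilpotent br -> y \in h -> z \in h -> br y z = 0.
Proof.
move=> nil yh zh; have [c ey] := e_compl (br e y); have [d ez] := e_compl (br e z).
have yzE := bracket_hyperplane yh zh ey ez.
have [c0 | c0] := eqVneq c 0.
  have [d0 | d0] := eqVneq d 0; first by rewrite yzE c0 d0 !scale0r subrr.
  suff -> : y = 0 by rewrite br0l.
  apply: (nilpotent_ad_eigen (y := z) nil d0).
  by rewrite br_anticomm yzE c0 scale0r sub0r opprK.
rewrite yzE; apply: (nilpotent_ad_eigen (y := y) nil c0).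
by rewrite brDr brZr brNr brZr br_alt scaler0 oppr0 addr0 yzE.
Qed.

End SymplecticHyperplane.

(* A quadratic Lie algebra with an abelian hyperplane h complemented by e is
   abelian: by invariance [x, e] is orthogonal to everything for x in h. *)
Lemma quadratic_abelian_hyperplane (B : V -> V -> R) (h : {vspace V}) (e : V) :
  quadratic br B -> (forall y z, y \in h -> z \in h -> br y z = 0) ->
  (forall v, exists t, v - t *: e \in h) -> abelian br.
Proof.
move=> [[BL BR] _ nondeg inv] h_ab e_compl.
have B0l w : B 0 w = 0.
  by apply: (lin0 (f := B^~ w : V -> R^o)) => a u v; apply: BL.
have BRu u : forall a v w, (B u (a *: v + w) : R^o) = a *: (B u v : R^o) + B u w.
  by move=> a v w; apply: BR.
have decomp := complement_decomp e_compl.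
have central x : x \in h -> br x e = 0.
  move=> xh; apply: nondeg => v; have [t [p ph ->]] := decomp v.
  have Bxe_e : B (br x e) e = 0 by have := inv x e e; lra.
  have := inv x e p; rewrite (h_ab x p) // B0l addr0 => Bxe_h.
  by rewrite (linD (BRu _)) (linZ (BRu _)) Bxe_e Bxe_h [_ *: _]mulr0 addr0.
move=> u v; have [s [p ph ->]] := decomp u; have [t [q qh ->]] := decomp v.
rewrite brDl !brDr !brZl !brZr br_alt central // (br_anticomm e) central //.
by rewrite (h_ab p q) // oppr0 !scaler0 !addr0.
Qed.

End LieAlgebra.

Theorem mainTheorem3 (R : realType) (V : vectType R) (br : V -> V -> V)
    (B : V -> V -> R) (n : nat) :
  lie_bracket br -> quadratic br B -> nilpotent br ->
  \dim (fullv : {vspace V}) = n ->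
  admits_k_symplectic br n.-1 ->
  abelian br.
Proof.
move=> lie quad nil dimV [m [h [theta symp]]].
have hyper : \dim (fullv : {vspace V}) = (\dim h).+1.
  by apply: (symplectic_hyperplane symp); rewrite dimV.
have [e e_compl] : exists e : V, forall v, exists t, v - t *: e \in h.
  by apply: codim1_complement; rewrite hyper.
apply: (quadratic_abelian_hyperplane lie quad _ e_compl) => y z yh zh.
exact: (hyperplane_abelian lie symp e_compl nil yh zh).
Qed.
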